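(* Let $X$ be a uniformly joinable, chain connected Hausdorff uniform space and let $f\colon X\to Y$ generate the uniform structure of the (Hausdorff) uniform space $Y$. The following are equivalent: (a) $f$ is a generalized uniform covering map; (b) $f$ satisfies conditions GP1 and GP2; (c) $\widetilde f\colon GP(X,x_0)\to GP(Y,f(x_0))$ is a uniform equivalence for some $x_0\in X$.
   Context: $f(E)=\{(f(x),f(y)):(x,y)\in E\}$; a surjection $f$ generates the uniform structure of its range if the sets $f(E)$ form a base of it. $R(X,E)$ is the Rips complex (vertex set $X$, simplices the finite $F$ with $F\times F\subset E$); $e(x,y)$ the edge-path; $E$-chains $x_0,\dots,x_n$ ($(x_i,x_{i+1})\in E$) are regarded as edge-paths in $R(X,E)$. $X$ is chain connected if for each $E$ any two points are joined by an $E$-chain. Paths $c,d$ in $R(X,E)$ with end-points in $X$ are $E$-homotopic if their initial points $x_c,x_d$ and terminal points $y_c,y_d$ satisfy $(x_c,x_d),(y_c,y_d)\in E$ and $c\simeq e(x_c,x_d)\ast d\ast e(y_d,y_c)$ rel. end-points in $R(X,E)$. A generalized path from $x$ to $y$ is a family $\{[c_E]\}_E$ of homotopy classes rel. end-points of paths from $x$ to $y$ in $R(X,E)$ with $c_F\simeq c_E$ in $R(X,E)$ for $F\subset E$; it is $F$-short if $(x,y)\in F$ and $c_F\simeq e(x,y)$ in $R(X,F)$; generalized paths $c,d$ are $F$-homotopic if $c_F$ is $F$-homotopic to $d_F$. $GP(X,x_0)$: generalized paths from $x_0$ with uniform base $F^\ast=\{(c,d): c,d\ F\text{-homotopic}\}$.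 $\widetilde f(c)_F=[f_E(c_E)]$, $E=f^{-1}(F)$. $X$ is uniformly joinable if for each $E$ there is $F$ with any $(x,y)\in F$ joined by an $E$-short generalized path. A generalized uniform covering map is an $f$ generating the uniform structure of $Y$ with: GP1: for every $x_0$ every generalized path in $Y$ from $f(x_0)$ is $\widetilde f(d)$ for a generalized path $d$ from $x_0$; GP2: for every entourage $E$ of $X$ there is $F$ such that generalized paths $\alpha,\beta$ in $X$ with common origin are $E$-homotopic if $\widetilde f(\alpha),\widetilde f(\beta)$ are $f(F)$-homotopic; C1: for every $E$ there is $F$ such that every $f(F)$-chain starting at $f(x_0)$ lifts to an $E$-chain starting at $x_0$; C2: for every $E$ there is $F$ such that $F$-chains $\alpha,\beta$ with common origin are $E$-homotopic if $f(\alpha),f(\beta)$ are $f(F)$-homotopic. *)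

From Stdlib Require Import List.
Import ListNotations.
Set Implicit Arguments.

Definition rel (T : Type) := T -> T -> Prop.
Definition subrel {T} (E F : rel T) := forall x y, E x y -> F x y.

Record UniformSpace := {
  carrier :> Type;
  ent : rel carrier -> Prop;
  ent_full : ent (fun _ _ => True);
  ent_diag : forall E x, ent E -> E x x;
  ent_super : forall E F, ent E -> subrel E F -> ent F;
  ent_meet : forall E F, ent E -> ent F -> ent (fun x y => E x y /\ F x y);
  ent_inv : forall E, ent E -> ent (fun x y => E y x);
  ent_half : forall E, ent E ->
    exists F, ent F /\ forall x y z, F x y -> F y z -> E x z }.
Arguments ent {_} _.

(* "Entourage" in the paper: symmetric entourage. *)
Definition sent {X : UniformSpace} (E : rel X) : Prop :=
  ent E /\ (forall x y, E x y -> E y x).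

Definition Hausdorff (X : UniformSpace) : Prop :=
  forall x y : X, (forall E, ent E -> E x y) -> x = y.

Definition img {A B} (f : A -> B) (E : rel A) : rel B :=
  fun u v => exists x y, E x y /\ f x = u /\ f y = v.
Definition preim {A B} (f : A -> B) (F : rel B) : rel A :=
  fun x y => F (f x) (f y).

Definition generates {X Y : UniformSpace} (f : X -> Y) : Prop :=
  (forall y, exists x, f x = y) /\
  (forall E, ent E -> ent (img f E)) /\
  (forall F, ent F -> exists E, ent E /\ subrel (img f E) F).

(* Rips complex R(X,E): finite simplices F with F x F in E *)
Definition rips_simplex {T} (E : rel T) (l : list T) : Prop :=
  forall p q, In p l -> In q l -> E p q.

Fixpoint consec {T} (E : rel T) (l : list T) : Prop :=
  match l with
  | a :: ((b :: _) as t) => E a b /\ consec E t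
  | _ => True
  end.

Definition epath {T} (E : rel T) (x y : T) (l : list T) : Prop :=
  hd_error l = Some x /\ last l x = y /\
  consec (fun a b => rips_simplex E [a; b]) l.

Definition chain {T} (E : rel T) (x : T) (l : list T) : Prop :=
  hd_error l = Some x /\ consec E l.

(* homotopy rel. end-points of edge paths in R(X,E)
   (edge-path equivalence of the simplicial complex) *)
Inductive ehtp {T} (E : rel T) : list T -> list T -> Prop :=
| eh_refl l : ehtp E l l
| eh_sym l m : ehtp E l m -> ehtp E m l
| eh_trans l m n : ehtp E l m -> ehtp E m n -> ehtp E l n
| eh_tri u v a b c : rips_simplex E [a; b; c] ->
    ehtp E (u ++ a :: b :: c :: v) (u ++ a :: c :: v)
| eh_deg u v a : rips_simplex E [a] ->
    ehtp E (u ++ a :: a :: v) (u ++ a :: v).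

(* E-homotopy of paths with endpoints in X:
   c ~ e(x_c,x_d) * d * e(y_d,y_c) rel end-points in R(X,E) *)
Definition lhomot {T} (E : rel T) (l m : list T) : Prop :=
  exists xc yc xd yd,
    hd_error l = Some xc /\ last l xc = yc /\
    hd_error m = Some xd /\ last m xd = yd /\
    E xc xd /\ E yc yd /\ ehtp E l (xc :: m ++ [yc]).

(* generalized path from x to y: a representative c_E for each entourage E *)
Definition gen_path {X : UniformSpace} (x y : X) (c : rel X -> list X) : Prop :=
  (forall E, sent E -> epath E x y (c E)) /\
  (forall E F, sent E -> sent F -> subrel F E -> ehtp E (c F) (c E)).

Definition in_GP {X : UniformSpace} (x0 : X) (c : rel X -> list X) : Prop :=
  exists y, gen_path x0 y c.

(* equality of generalized paths (as families of homotopy classes) *)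
Definition gp_eq {X : UniformSpace} (c d : rel X -> list X) : Prop :=
  forall E, sent E -> ehtp E (c E) (d E).

Definition gp_homot {X : UniformSpace} (F : rel X) (c d : rel X -> list X) : Prop :=
  lhomot F (c F) (d F).

Definition short {X : UniformSpace} (E : rel X) (x y : X) (c : rel X -> list X) : Prop :=
  E x y /\ ehtp E (c E) [x; y].

Definition uniformly_joinable (X : UniformSpace) : Prop :=
  forall E : rel X, sent E -> exists F, sent F /\
    forall x y, F x y -> exists c, gen_path x y c /\ short E x y c.

Definition chain_connected (X : UniformSpace) : Prop :=
  forall E : rel X, sent E -> forall x y : X,
    exists l, chain E x l /\ last l x = y.

Definition tilde {X Y : UniformSpace} (f : X -> Y) (c : rel X -> list X) : rel Y -> list Y :=
  fun F => map f (c (preim f F)).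

Definition GP1 {X Y : UniformSpace} (f : X -> Y) : Prop :=
  forall (x0 : X) e, in_GP (f x0) e ->
    exists d, in_GP x0 d /\ gp_eq (tilde f d) e.

Definition GP2 {X Y : UniformSpace} (f : X -> Y) : Prop :=
  forall E : rel X, sent E -> exists F, sent F /\
    forall (x0 : X) a b, in_GP x0 a -> in_GP x0 b ->
      gp_homot (img f F) (tilde f a) (tilde f b) -> gp_homot E a b.

Definition C1 {X Y : UniformSpace} (f : X -> Y) : Prop :=
  forall E : rel X, sent E -> exists F, sent F /\
    forall (x0 : X) l, chain (img f F) (f x0) l ->
      exists l', chain E x0 l' /\ map f l' = l.

Definition C2 {X Y : UniformSpace} (f : X -> Y) : Prop :=
  forall E : rel X, sent E -> exists F, sent F /\
    forall (x0 : X) a b, chain F x0 a -> chain F x0 b ->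
      lhomot (img f F) (map f a) (map f b) -> lhomot E a b.

Definition gen_uniform_covering {X Y : UniformSpace} (f : X -> Y) : Prop :=
  generates f /\ GP1 f /\ GP2 f /\ C1 f /\ C2 f.

(* \tilde f : GP(X,x0) -> GP(Y,f x0) is a uniform equivalence:
   bijective on points, uniformly continuous with uniformly continuous
   inverse, w.r.t. the bases {F*} *)
Definition tilde_unif_equiv {X Y : UniformSpace} (f : X -> Y) (x0 : X) : Prop :=
  (forall c d, in_GP x0 c -> in_GP x0 d ->
     gp_eq (tilde f c) (tilde f d) -> gp_eq c d) /\
  (forall e, in_GP (f x0) e -> exists c, in_GP x0 c /\ gp_eq (tilde f c) e) /\
  (forall F : rel Y, sent F -> exists E : rel X, sent E /\
     forall c d, in_GP x0 c -> in_GP x0 d ->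
       gp_homot E c d -> gp_homot F (tilde f c) (tilde f d)) /\
  (forall E : rel X, sent E -> exists F : rel Y, sent F /\
     forall c d, in_GP x0 c -> in_GP x0 d ->
       gp_homot F (tilde f c) (tilde f d) -> gp_homot E c d).

(* Uniform continuity of f~ is automatic: f maps edge paths of R(X, f^-1(F)) to edge paths of
   R(Y, F).  GP1 is surjectivity of f~ onto GP(Y, f x0) and GP2 is uniform continuity of its
   inverse; injectivity follows from GP2, because generalized paths whose images agree are
   homotopic at every scale, hence (X being Hausdorff) have the same end point and coincide.
   Uniform joinability replaces an F-chain by a generalized path homotopic to it at every
   coarser scale, which turns GP1 into the chain lifting C1 and GP2 into C2.  Conversely,
   chain connectedness gives a generalized path g from x0 to any x1; prepending g, and
   cancelling it again by backtracking along rev g, moves GP1 and GP2 from x0 to x1. *)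

From Stdlib Require Import List.
Import ListNotations.

Section ListFacts.
Context {T : Type}.

Lemma last_cons (a : T) l d : last (a :: l) d = last l a.
Proof.
  revert a d; induction l as [|b l IH]; intros a d; [reflexivity|].
  change (last (b :: l) d = last (b :: l) a). now rewrite (IH b d), (IH b a).
Qed.

Lemma last_app (l m : list T) d : last (l ++ m) d = last m (last l d).
Proof.
  revert d; induction l as [|a l IH]; intros d; [reflexivity|].
  simpl app. now rewrite last_cons, IH, last_cons.
Qed.

Lemma last_rev (l : list T) d : last (rev l) d = hd d l.
Proof. destruct l as [|a l]; [reflexivity|]. simpl. now rewrite last_app. Qed.

Lemma hd_error_app (l m : list T) x : hd_error l = Some x -> hd_error (l ++ m) = Some x.
Proof. destruct l; simpl; congruence. Qed.

Lemma hd_error_rev (x : T) l : hd_error (rev (x :: l)) = Some (last l x).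
Proof.
  revert x; induction l as [|y l IH]; intros x; [reflexivity|].
  change (rev (x :: y :: l)) with (rev (y :: l) ++ [x]).
  rewrite last_cons. apply hd_error_app, IH.
Qed.

Lemma hd_error_Some_cons {l : list T} {x} : hd_error l = Some x -> exists l', l = x :: l'.
Proof. destruct l; simpl; intros H; inversion H; subst; eauto. Qed.

Context {R : rel T}.

Lemma consec_app l m d : consec R l -> consec R m ->
  (l <> [] -> m <> [] -> R (last l d) (hd d m)) -> consec R (l ++ m).
Proof.
  revert d; induction l as [|a [|b l] IH]; intros d Hl Hm Hjoin; [exact Hm| |].
  - destruct m as [|c m]; [exact I|]. split; [|exact Hm].
    apply (Hjoin ltac:(discriminate) ltac:(discriminate)).
  - destruct Hl as [Hab Hl]. split; [exact Hab|].
    apply (IH d Hl Hm). intros _ Hm'. apply (Hjoin ltac:(discriminate) Hm').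
Qed.

Lemma consec_mono {S : rel T} {l} : subrel R S -> consec R l -> consec S l.
Proof.
  intros HRS; induction l as [|a [|b l] IH]; auto.
  intros [Hab Hl]. split; auto.
Qed.

Lemma consec_rev l : (forall a b, R a b -> R b a) -> consec R l -> consec R (rev l).
Proof.
  intros Hsym; induction l as [|a l IH]; intros Hl; [exact I|].
  simpl. apply consec_app with (d := a).
  - apply IH. destruct l; [exact I|]. apply Hl.
  - exact I.
  - intros Hne _. rewrite last_rev. destruct l as [|b l]; [now contradiction Hne|].
    apply Hsym, Hl.
Qed.

End ListFacts.

Lemma last_map {A B} (f : A -> B) l d : last (map f l) (f d) = f (last l d).
Proof.
  revert d; induction l as [|a l IH]; intros d; [reflexivity|].
  simpl map. rewrite !last_cons. apply IH.
Qed.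

Lemma hd_error_map {A B} (f : A -> B) l x :
  hd_error l = Some x -> hd_error (map f l) = Some (f x).
Proof. destruct l; simpl; congruence. Qed.

Lemma consec_map {A B} (R : rel A) (S : rel B) (f : A -> B) l :
  (forall a b, R a b -> S (f a) (f b)) -> consec R l -> consec S (map f l).
Proof.
  intros HRS; induction l as [|a [|b l] IH]; auto.
  intros [Hab Hl]. split; auto.
Qed.

Lemma chain_mono {T} {E F : rel T} {x l} : subrel E F -> chain E x l -> chain F x l.
Proof. intros HEF [Hx Hl]. split; [exact Hx|]. exact (consec_mono HEF Hl). Qed.

Ltac rips_pairs :=
  let p := fresh "p" in let q := fresh "q" in
  let Hp := fresh "Hp" in let Hq := fresh "Hq" in
  intros p q Hp Hq; simpl in Hp, Hq;
  repeat match goal with H : _ \/ _ |- _ => destruct H | H : False |- _ => destruct H end;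
  subst; auto.

Lemma rips_simplex_mono {T} (E F : rel T) s :
  subrel E F -> rips_simplex E s -> rips_simplex F s.
Proof. intros HEF Hs p q Hp Hq. apply HEF, Hs; auto. Qed.

Lemma rips_simplex_map {A B} (f : A -> B) (F : rel B) s :
  rips_simplex (preim f F) s -> rips_simplex F (map f s).
Proof.
  intros Hs p q Hp Hq.
  apply in_map_iff in Hp as (x & <- & Hx). apply in_map_iff in Hq as (y & <- & Hy).
  exact (Hs x y Hx Hy).
Qed.

Lemma ehtp_mono {T} {E F : rel T} {l m} : subrel E F -> ehtp E l m -> ehtp F l m.
Proof.
  intros HEF; induction 1.
  - apply eh_refl.
  - now apply eh_sym.
  - eapply eh_trans; eauto.
  - apply eh_tri. eapply rips_simplex_mono; eauto.
  - apply eh_deg. eapply rips_simplex_mono; eauto.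
Qed.

Lemma ehtp_map {A B} (f : A -> B) (F : rel B) l m :
  ehtp (preim f F) l m -> ehtp F (map f l) (map f m).
Proof.
  induction 1.
  - apply eh_refl.
  - now apply eh_sym.
  - eapply eh_trans; eauto.
  - rewrite !map_app. apply eh_tri, (rips_simplex_map f F [a; b; c]); auto.
  - rewrite !map_app. apply eh_deg, (rips_simplex_map f F [a]); auto.
Qed.

Section EdgePathHomotopy.
Context {T : Type} {E : rel T}.

Lemma ehtp_context p q {l m} : ehtp E l m -> ehtp E (p ++ l ++ q) (p ++ m ++ q).
Proof.
  induction 1 as [| | | u v a b c Habc | u v a Ha].
  - apply eh_refl.
  - now apply eh_sym.
  - eapply eh_trans; eauto.
  - pose proof (eh_tri (p ++ u) (v ++ q) Habc) as H.
    rewrite <- !app_assoc in *. exact H.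
  - pose proof (eh_deg (p ++ u) (v ++ q) Ha) as H.
    rewrite <- !app_assoc in *. exact H.
Qed.

Lemma ehtp_app l l' m m' : ehtp E l l' -> ehtp E m m' -> ehtp E (l ++ m) (l' ++ m').
Proof.
  intros Hl Hm. apply eh_trans with (l' ++ m).
  - exact (ehtp_context [] m Hl).
  - pose proof (ehtp_context l' [] Hm) as H. rewrite !app_nil_r in H. exact H.
Qed.

Lemma ehtp_rev l m : ehtp E l m -> ehtp E (rev l) (rev m).
Proof.
  induction 1 as [| | | u v a b c Habc | u v a Ha].
  - apply eh_refl.
  - now apply eh_sym.
  - eapply eh_trans; eauto.
  - rewrite !rev_app_distr; simpl; rewrite <- !app_assoc; simpl.
    apply eh_tri. intros p q Hp Hq. apply Habc; simpl in *; tauto.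
  - rewrite !rev_app_distr; simpl; rewrite <- !app_assoc; simpl.
    now apply eh_deg.
Qed.

Lemma ehtp_hd_error {l m} : ehtp E l m -> hd_error l = hd_error m.
Proof. induction 1; try congruence; destruct u; reflexivity. Qed.

Lemma ehtp_last {l m} : ehtp E l m -> forall d, last l d = last m d.
Proof.
  induction 1; intros d; try congruence; now rewrite !last_app, !last_cons.
Qed.

Hypothesis E_refl : forall x, E x x.

Lemma ehtp_stutter x m : hd_error m = Some x -> ehtp E (x :: m) m.
Proof.
  intros Hm. destruct (hd_error_Some_cons Hm) as (m' & ->).
  apply (eh_deg [] m'). rips_pairs.
Qed.

Lemma ehtp_stutter_last x m : hd_error m = Some x -> ehtp E (m ++ [last m x]) m.
Proof.
  intros Hm. destruct (hd_error_Some_cons Hm) as (m' & ->).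
  set (y := last (x :: m') x).
  assert (H : ehtp E (y :: rev (x :: m')) (rev (x :: m'))).
  { apply ehtp_stutter. rewrite hd_error_rev. unfold y. now rewrite last_cons. }
  apply ehtp_rev in H.
  change (rev (y :: rev (x :: m'))) with (rev (rev (x :: m')) ++ [y]) in H.
  now rewrite rev_involutive in H.
Qed.

Lemma ehtp_pad x m : hd_error m = Some x -> ehtp E (x :: m ++ [last m x]) m.
Proof.
  intros Hm. eapply eh_trans.
  - apply ehtp_stutter, hd_error_app, Hm.
  - now apply ehtp_stutter_last.
Qed.

Lemma ehtp_backtrack l x m :
  consec (fun a b => rips_simplex E [a; b]) (x :: l) -> hd_error m = Some (last l x) ->
  ehtp E (rev l ++ x :: x :: l ++ m) m.
Proof.
  revert x; induction l as [|y l IH]; intros x Hl Hm.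
  - simpl. eapply eh_trans; apply ehtp_stutter; auto.
  - destruct Hl as [Hxy Hl]. rewrite last_cons in Hm.
    assert (E x y /\ E y x) as [Exy Eyx] by (split; apply Hxy; simpl; auto).
    simpl rev; rewrite <- app_assoc; simpl app.
    apply eh_trans with (rev l ++ y :: x :: y :: l ++ m).
    { pose proof (eh_deg (rev l ++ [y]) (y :: l ++ m) (E := E) (a := x)) as H.
      rewrite <- !app_assoc in H. apply H. rips_pairs. }
    apply eh_trans with (rev l ++ y :: y :: l ++ m).
    { apply eh_tri. rips_pairs. }
    apply IH; assumption.
Qed.

Lemma ehtp_rev_cancel {p x y m} :
  epath E x y p -> hd_error m = Some y -> ehtp E (rev p ++ p ++ m) m.
Proof.
  intros (Hp & Hy & Hc) Hm. destruct (hd_error_Some_cons Hp) as (l & ->).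
  rewrite last_cons in Hy. subst y.
  simpl rev; rewrite <- app_assoc. now apply ehtp_backtrack.
Qed.

End EdgePathHomotopy.

Section LocalHomotopy.
Context {T : Type} {E : rel T}.

Lemma lhomot_spec {l m x y} : hd_error l = Some x -> hd_error m = Some y ->
  lhomot E l m <-> E x y /\ E (last l x) (last m y) /\ ehtp E l (x :: m ++ [last l x]).
Proof.
  intros Hl Hm; split.
  - intros (xc & yc & xd & yd & Hl' & <- & Hm' & <- & Hx & Hy & H).
    rewrite Hl in Hl'; rewrite Hm in Hm'.
    injection Hl' as <-; injection Hm' as <-. repeat split; auto.
  - intros (Hx & Hy & H). exists x, (last l x), y, (last m y). repeat split; auto.
Qed.

Lemma lhomot_last {l m x y} : hd_error l = Some x -> hd_error m = Some y ->
  lhomot E l m -> E (last l x) (last m y).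
Proof. intros Hl Hm H. apply (lhomot_spec Hl Hm) in H. tauto. Qed.

Lemma lhomot_mono {F : rel T} {l m} : subrel E F -> lhomot E l m -> lhomot F l m.
Proof.
  intros HEF (xc & yc & xd & yd & Hl & Hyc & Hm & Hyd & Hx & Hy & H).
  exists xc, yc, xd, yd. repeat split; auto. exact (ehtp_mono HEF H).
Qed.

Lemma lhomot_transport l m l' m' :
  lhomot E l m -> ehtp E l l' -> ehtp E m m' -> lhomot E l' m'.
Proof.
  intros (xc & yc & xd & yd & Hl & Hyc & Hm & Hyd & Hx & Hy & H) Hll' Hmm'.
  exists xc, yc, xd, yd. repeat split; auto.
  - now rewrite <- (ehtp_hd_error Hll').
  - now rewrite <- (ehtp_last Hll').
  - now rewrite <- (ehtp_hd_error Hmm').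
  - now rewrite <- (ehtp_last Hmm').
  - apply eh_trans with l; [now apply eh_sym|].
    apply eh_trans with (xc :: m ++ [yc]); [exact H|].
    exact (ehtp_context [xc] [yc] Hmm').
Qed.

Hypothesis E_refl : forall x, E x x.

Lemma lhomot_of_ehtp l m x : hd_error l = Some x -> ehtp E l m -> lhomot E l m.
Proof.
  intros Hl H. pose proof (ehtp_hd_error H) as Hhd. rewrite Hl in Hhd.
  apply (lhomot_spec Hl (eq_sym Hhd)). rewrite (ehtp_last H x).
  repeat split; auto.
  apply eh_trans with m; [exact H|]. apply eh_sym, (ehtp_pad E_refl); auto.
Qed.

Lemma ehtp_of_lhomot l m x : hd_error l = Some x -> hd_error m = Some x ->
  last l x = last m x -> lhomot E l m -> ehtp E l m.
Proof.
  intros Hl Hm Hlast H. apply (lhomot_spec Hl Hm) in H as (_ & _ & H).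
  rewrite Hlast in H. apply eh_trans with (x :: m ++ [last m x]); [exact H|].
  now apply (ehtp_pad E_refl).
Qed.

Lemma lhomot_edge_point x y : E y x -> lhomot E [x; y] [x].
Proof.
  intros Eyx. apply (lhomot_spec (x := x) (y := x)); auto.
  repeat split; auto. apply eh_sym, (ehtp_stutter E_refl); auto.
Qed.

Lemma lhomot_prefix p h l m z :
  hd_error p = Some h -> hd_error l = Some z -> hd_error m = Some z ->
  lhomot E l m -> lhomot E (p ++ l) (p ++ m).
Proof.
  intros Hp Hl Hm H. apply (lhomot_spec Hl Hm) in H as (_ & Hy & H).
  destruct (hd_error_Some_cons Hl) as (l' & ->).
  destruct (hd_error_Some_cons Hm) as (m' & ->).
  apply (lhomot_spec (x := h) (y := h)); try now apply hd_error_app.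
  rewrite !last_app, !last_cons in *. repeat split; auto.
  apply eh_trans with (p ++ z :: (z :: m') ++ [last l' z]).
  { apply ehtp_app; [apply eh_refl | exact H]. }
  apply eh_trans with (p ++ (z :: m') ++ [last l' z]).
  { apply ehtp_app; [apply eh_refl|]. apply (ehtp_stutter E_refl). reflexivity. }
  apply eh_sym. rewrite app_assoc. apply (ehtp_stutter E_refl).
  apply hd_error_app, hd_error_app, Hp.
Qed.

Lemma lhomot_cancel p h z l m :
  epath E h z p -> hd_error l = Some z -> hd_error m = Some z ->
  lhomot E (p ++ l) (p ++ m) -> lhomot E l m.
Proof.
  intros Hp Hl Hm H.
  assert (Hrev : hd_error (rev p) = Some z).
  { destruct Hp as (Hh & Hz & _). destruct (hd_error_Some_cons Hh) as (p' & ->).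
    rewrite hd_error_rev. now rewrite last_cons in Hz; rewrite Hz. }
  apply lhomot_transport with (rev p ++ p ++ l) (rev p ++ p ++ m).
  - apply (lhomot_prefix (rev p) z (p ++ l) (p ++ m) h); auto;
      apply hd_error_app, Hp.
  - now apply (ehtp_rev_cancel E_refl Hp).
  - now apply (ehtp_rev_cancel E_refl Hp).
Qed.

End LocalHomotopy.

Lemma lhomot_map {A B} (f : A -> B) (F : rel B) l m :
  lhomot (preim f F) l m -> lhomot F (map f l) (map f m).
Proof.
  intros (xc & yc & xd & yd & Hl & Hyc & Hm & Hyd & Hx & Hy & H).
  exists (f xc), (f yc), (f xd), (f yd). repeat split; auto.
  - now apply hd_error_map.
  - now rewrite last_map, Hyc.
  - now apply hd_error_map.
  - now rewrite last_map, Hyd.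
  - apply ehtp_map in H. now rewrite map_cons, map_app in H.
Qed.

Section Entourages.
Context {X : UniformSpace}.

Lemma sent_refl {E : rel X} : sent E -> forall x, E x x.
Proof. intros [HE _] x. now apply ent_diag. Qed.

Lemma sent_full : sent (fun _ _ : X => True).
Proof. split; [apply ent_full | auto]. Qed.

Lemma sent_meet (E F : rel X) : sent E -> sent F -> sent (fun x y => E x y /\ F x y).
Proof. intros [HE sE] [HF sF]. split; [now apply ent_meet | intros x y []; auto]. Qed.

Lemma sent_symmetrize (E : rel X) : ent E -> sent (fun x y => E x y /\ E y x).
Proof.
  intros HE. split; [apply ent_meet; [exact HE | now apply ent_inv] | intros x y []; auto].
Qed.

End Entourages.

Lemma img_mono {A B} (f : A -> B) (E F : rel A) : subrel E F -> subrel (img f E) (img f F).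
Proof. intros HEF u v (x & y & Hxy & Hx & Hy). exists x, y; auto. Qed.

Lemma preim_mono {A B} (f : A -> B) (E F : rel B) : subrel E F -> subrel (preim f E) (preim f F).
Proof. intros HEF x y; apply HEF. Qed.

Lemma subrel_preim_img {A B} (f : A -> B) (E : rel A) : subrel E (preim f (img f E)).
Proof. intros x y Hxy. exists x, y; auto. Qed.

Section GeneratedStructure.
Context {X Y : UniformSpace} {f : X -> Y}.
Hypothesis f_generates : generates f.

Lemma sent_img (E : rel X) : sent E -> sent (img f E).
Proof.
  intros [HE sE]. split; [now apply f_generates|].
  intros u v (x & y & Hxy & Hx & Hy). exists y, x; auto.
Qed.

Lemma sent_preim (F : rel Y) : sent F -> sent (preim f F).
Proof.
  intros [HF sF]. split; [|intros x y; apply sF].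
  destruct (proj2 (proj2 f_generates) F HF) as (E & HE & HEF).
  apply (ent_super _ HE). intros x y Hxy. apply HEF. exists x, y; auto.
Qed.

End GeneratedStructure.

Section GeneralizedPaths.
Context {X : UniformSpace}.

Lemma gen_path_epath {x y : X} {c} {E} : gen_path x y c -> sent E -> epath E x y (c E).
Proof. intros [Hc _] HE. exact (Hc E HE). Qed.

Lemma in_GP_of_gen_path {x y : X} {c} : gen_path x y c -> in_GP x c.
Proof. intros Hc. now exists y. Qed.

Lemma gen_path_const (x : X) : gen_path x x (fun _ => [x]).
Proof. split; [intros E _; repeat split | intros; apply eh_refl]. Qed.

Lemma gen_path_app {x y z : X} {c d} :
  gen_path x y c -> gen_path y z d -> gen_path x z (fun E => c E ++ d E).
Proof.
  intros Hc Hd. split; [|intros E F HE HF HFE; apply ehtp_app; [apply Hc | apply Hd]; auto].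
  intros E HE.
  destruct (gen_path_epath Hc HE) as (Hc1 & Hc2 & Hc3).
  destruct (gen_path_epath Hd HE) as (Hd1 & Hd2 & Hd3).
  destruct (hd_error_Some_cons Hd1) as (d' & Hd').
  repeat split.
  - now apply hd_error_app.
  - now rewrite last_app, Hc2.
  - apply consec_app with (d := x); auto. intros _ _.
    rewrite Hc2, Hd'. simpl. rips_pairs; apply (sent_refl HE).
Qed.

Lemma gen_path_rev {x y : X} {c} : gen_path x y c -> gen_path y x (fun E => rev (c E)).
Proof.
  intros Hc. split; [|intros E F HE HF HFE; apply ehtp_rev, Hc; auto].
  intros E HE. destruct (gen_path_epath Hc HE) as (Hc1 & Hc2 & Hc3).
  destruct (hd_error_Some_cons Hc1) as (l & Hl). rewrite Hl in *.
  repeat split.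
  - rewrite hd_error_rev. now rewrite last_cons in Hc2; rewrite Hc2.
  - now rewrite last_rev.
  - apply consec_rev; auto. intros a b Hab p q Hp Hq. apply Hab; simpl in *; tauto.
Qed.

Lemma gen_path_short_ehtp {x y : X} {c G H} :
  gen_path x y c -> short G x y c -> sent G -> sent H -> subrel G H -> ehtp H (c H) [x; y].
Proof.
  intros Hc [_ Hs] HG HH HGH. apply eh_trans with (c G).
  - apply eh_sym, Hc; auto.
  - exact (ehtp_mono HGH Hs).
Qed.

Lemma chain_gen_path {G F0 : rel X} : sent G -> sent F0 ->
  (forall x y, F0 x y -> exists c, gen_path x y c /\ short G x y c) ->
  forall l x, chain F0 x l -> exists A, gen_path x (last l x) A /\
    forall H, sent H -> subrel G H -> ehtp H (A H) l.
Proof.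
  intros HG HF0 Hjoin l; induction l as [|x' [|y l] IH]; intros x [Hx Hl];
    try discriminate; injection Hx as ->.
  - exists (fun _ => [x]). split; [apply gen_path_const | intros; apply eh_refl].
  - destruct Hl as [Fxy Hl]. destruct (Hjoin x y Fxy) as (c & Hc & Hshort).
    destruct (IH y (conj eq_refl Hl)) as (A & HA & HAl).
    exists (fun H => c H ++ A H). split.
    + rewrite !last_cons in *. exact (gen_path_app Hc HA).
    + intros H HH HGH. apply eh_trans with ([x; y] ++ y :: l).
      * apply ehtp_app; [exact (gen_path_short_ehtp Hc Hshort HG HH HGH) | auto].
      * apply (ehtp_app [x] [x] (y :: y :: l)); [apply eh_refl|].
        apply (ehtp_stutter (sent_refl HH)). reflexivity.
Qed.

Lemma gen_path_between (x0 x1 : X) :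
  uniformly_joinable X -> chain_connected X -> exists g, gen_path x0 x1 g.
Proof.
  intros Hjoin Hconn. destruct (Hjoin _ sent_full) as (F0 & HF0 & HF0join).
  destruct (Hconn F0 HF0 x0 x1) as (l & Hl & <-).
  destruct (chain_gen_path sent_full HF0 HF0join _ _ Hl) as (A & HA & _).
  now exists A.
Qed.

Lemma gp_homot_mono {x y x' y' : X} {c d} (K F : rel X) :
  gen_path x y c -> gen_path x' y' d -> sent K -> sent F -> subrel K F ->
  gp_homot K c d -> gp_homot F c d.
Proof.
  intros Hc Hd HK HF HKF H. apply lhomot_transport with (c K) (d K).
  - exact (lhomot_mono HKF H).
  - apply Hc; auto.
  - apply Hd; auto.
Qed.

(* Hausdorffness makes the end points agree; then homotopy at every scale is homotopy
   rel. end-points. *)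
Lemma gp_eq_of_gp_homot (x0 y y' : X) c d : Hausdorff X ->
  gen_path x0 y c -> gen_path x0 y' d -> (forall S, sent S -> gp_homot S c d) -> gp_eq c d.
Proof.
  intros HX Hc Hd Hcd.
  assert (Hy : y = y').
  { apply HX. intros E HE. pose proof (sent_symmetrize E HE) as HS.
    destruct (gen_path_epath Hc HS) as (Hc1 & Hc2 & _).
    destruct (gen_path_epath Hd HS) as (Hd1 & Hd2 & _).
    pose proof (lhomot_last Hc1 Hd1 (Hcd _ HS)) as [Hyy _]. now rewrite Hc2, Hd2 in Hyy. }
  subst y'. intros E HE.
  destruct (gen_path_epath Hc HE) as (Hc1 & Hc2 & _).
  destruct (gen_path_epath Hd HE) as (Hd1 & Hd2 & _).
  apply (ehtp_of_lhomot (sent_refl HE) _ _ x0 Hc1 Hd1); [congruence | apply Hcd, HE].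
Qed.

End GeneralizedPaths.

Section Lifting.
Context {X Y : UniformSpace} {f : X -> Y}.
Hypothesis f_generates : generates f.

Lemma gen_path_tilde {x y : X} {c} : gen_path x y c -> gen_path (f x) (f y) (tilde f c).
Proof.
  intros Hc. split.
  - intros F HF. destruct (gen_path_epath Hc (sent_preim f_generates F HF)) as (H1 & H2 & H3).
    unfold tilde; repeat split.
    + now apply hd_error_map.
    + now rewrite last_map, H2.
    + apply (consec_map (fun a b => rips_simplex (preim f F) [a; b])); auto.
      intros a b Hab. exact (rips_simplex_map f F [a; b] Hab).
  - intros F F' HF HF' HF'F. apply ehtp_map, Hc.
    1, 2: now apply sent_preim.
    now apply preim_mono.
Qed.

Lemma tilde_short_ehtp {x w : X} {c} (F : rel X) (K : rel Y) :
  gen_path x w c -> short F x w c -> sent F -> sent K -> subrel F (preim f K) ->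
  ehtp K (tilde f c K) [f x; f w].
Proof.
  intros Hc Hs HF HK HFK. apply (ehtp_map f K _ [x; w]).
  apply (gen_path_short_ehtp Hc Hs HF); auto. now apply sent_preim.
Qed.

(* The image of the F-short path c is f(F)-homotopic to a constant path, hence by GP2 so is its
   lift d at scale E; the end point of d is therefore E-close to x0. *)
Lemma lift_edge (E F : rel X) (x0 x w : X) c :
  sent E -> sent F -> GP1 f ->
  (forall a b, in_GP x0 a -> in_GP x0 b ->
     gp_homot (img f F) (tilde f a) (tilde f b) -> gp_homot E a b) ->
  gen_path x w c -> short F x w c -> f x = f x0 ->
  exists z, f z = f w /\ E x0 z.
Proof.
  intros HE HF P1 P2E Hc Hshort Hx.
  set (K := img f F).
  assert (HK : sent K) by now apply sent_img.
  pose proof (gen_path_tilde Hc) as Htc. rewrite Hx in Htc.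
  destruct (P1 x0 (tilde f c) (in_GP_of_gen_path Htc)) as (d & (z & Hd) & Hdc).
  assert (Hdw : ehtp K (tilde f d K) [f x0; f w]).
  { apply eh_trans with (tilde f c K); [now apply Hdc|].
    rewrite <- Hx. apply (tilde_short_ehtp F K Hc Hshort HF HK), subrel_preim_img. }
  destruct (gen_path_epath (gen_path_tilde Hd) HK) as (Htd1 & Htd2 & _).
  exists z; split.
  - rewrite <- Htd2. exact (ehtp_last Hdw _).
  - assert (Hconst : gp_homot E d (fun _ => [x0])).
    { apply P2E; [now exists z | exists x0; apply gen_path_const |].
      apply lhomot_transport with [f x0; f w] [f x0].
      - apply (lhomot_edge_point (sent_refl HK)).
        exists w, x. repeat split; [apply HF, Hshort | exact Hx].
      - now apply eh_sym.
      - apply eh_refl. }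
    destruct (gen_path_epath Hd HE) as (Hd1 & Hd2 & _).
    apply HE. rewrite <- Hd2. exact (lhomot_last (m := [x0]) Hd1 eq_refl Hconst).
Qed.

Lemma C1_of_GP : uniformly_joinable X -> GP1 f -> GP2 f -> C1 f.
Proof.
  intros Hjoin P1 P2 E HE.
  destruct (P2 E HE) as (F & HF & P2E).
  destruct (Hjoin F HF) as (F0 & HF0 & HF0join).
  exists F0; split; [exact HF0|].
  intros x0 l; revert x0; induction l as [|y [|y' l] IH]; intros x0 [Hh Hl];
    try discriminate; injection Hh as ->.
  - exists [x0]. repeat split.
  - destruct Hl as [(x & w & Fxw & Hx & <-) Hl].
    destruct (HF0join x w Fxw) as (c & Hc & Hshort).
    destruct (lift_edge E F x0 x w c HE HF P1 (P2E x0) Hc Hshort Hx) as (z & Hz & Ez).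
    destruct (IH z) as (l' & [Hl1 Hl2] & Hmap); [split; [now rewrite Hz | exact Hl]|].
    destruct (hd_error_Some_cons Hl1) as (l'' & ->).
    exists (x0 :: z :: l''). repeat split; auto. simpl in Hmap |- *. now rewrite Hmap.
Qed.

Lemma C2_of_GP2 : uniformly_joinable X -> GP2 f -> C2 f.
Proof.
  intros Hjoin P2 E HE.
  destruct (P2 E HE) as (F & HF & P2E).
  set (G := fun x y => E x y /\ F x y).
  assert (HG : sent G) by now apply sent_meet.
  destruct (Hjoin G HG) as (F0 & HF0 & HF0join).
  exists (fun x y => F0 x y /\ G x y). split; [now apply sent_meet|].
  intros x0 a b Ha Hb Hab.
  assert (HF0G : subrel (fun x y => F0 x y /\ G x y) F0) by now intros x y [].
  destruct (chain_gen_path HG HF0 HF0join _ _ (chain_mono HF0G Ha)) as (A & HA & HAa).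
  destruct (chain_gen_path HG HF0 HF0join _ _ (chain_mono HF0G Hb)) as (B & HB & HBb).
  set (K := img f F).
  assert (HPK : sent (preim f K)) by now apply sent_preim, sent_img.
  assert (HGK : subrel G (preim f K)) by (intros x y [_ Fxy]; now apply subrel_preim_img).
  assert (HGE : subrel G E) by now intros x y [].
  apply lhomot_transport with (A E) (B E).
  - apply (P2E x0 A B (in_GP_of_gen_path HA) (in_GP_of_gen_path HB)).
    apply lhomot_transport with (map f a) (map f b).
    + refine (lhomot_mono _ Hab). apply img_mono. now intros x y (_ & _ & Fxy).
    + apply eh_sym, ehtp_map, HAa; assumption.
    + apply eh_sym, ehtp_map, HBb; assumption.
  - apply HAa; assumption.
  - apply HBb; assumption.
Qed.

Lemma gp_homot_of_tilde_eq (x0 : X) c d : GP2 f -> in_GP x0 c -> in_GP x0 d ->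
  gp_eq (tilde f c) (tilde f d) -> forall S, sent S -> gp_homot S c d.
Proof.
  intros P2 [y Hc] Hd Heq S HS. destruct (P2 S HS) as (F & HF & P2S).
  apply (P2S x0 c d (in_GP_of_gen_path Hc) Hd).
  assert (HK : sent (img f F)) by now apply sent_img.
  apply (lhomot_of_ehtp (sent_refl HK)) with (f x0).
  - exact (proj1 (gen_path_epath (gen_path_tilde Hc) HK)).
  - now apply Heq.
Qed.

Lemma tilde_unif_equiv_of_GP (x0 : X) : Hausdorff X -> GP1 f -> GP2 f -> tilde_unif_equiv f x0.
Proof.
  intros HX P1 P2. split; [|split; [|split]].
  - intros c d Hc Hd Heq. pose proof Hc as [y Hc']. pose proof Hd as [y' Hd'].
    apply (gp_eq_of_gp_homot x0 y y' c d HX Hc' Hd').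
    exact (gp_homot_of_tilde_eq x0 c d P2 Hc Hd Heq).
  - intros e He. now apply P1.
  - intros F HF. exists (preim f F). split; [now apply sent_preim|].
    intros c d _ _. apply lhomot_map.
  - intros E HE. destruct (P2 E HE) as (F & HF & P2E).
    exists (img f F). split; [now apply sent_img|]. apply P2E.
Qed.

Lemma GP1_of_tilde_unif_equiv (x0 : X) :
  uniformly_joinable X -> chain_connected X -> tilde_unif_equiv f x0 -> GP1 f.
Proof.
  intros Hjoin Hconn (_ & Hsurj & _) x1 e [y He].
  destruct (gen_path_between x0 x1 Hjoin Hconn) as (g & Hg).
  pose proof (gen_path_tilde Hg) as Htg.
  destruct (Hsurj _ (in_GP_of_gen_path (gen_path_app Htg He))) as (c & [w Hc] & Hce).
  exists (fun E => rev (g E) ++ c E). split.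
  - exists w. exact (gen_path_app (gen_path_rev Hg) Hc).
  - intros H HH. unfold tilde; rewrite map_app, map_rev.
    apply eh_trans with (rev (tilde f g H) ++ tilde f g H ++ e H).
    + apply ehtp_app; [apply eh_refl | exact (Hce H HH)].
    + apply (ehtp_rev_cancel (sent_refl HH) (gen_path_epath Htg HH)).
      exact (proj1 (gen_path_epath He HH)).
Qed.

Lemma GP2_of_tilde_unif_equiv (x0 : X) :
  uniformly_joinable X -> chain_connected X -> tilde_unif_equiv f x0 -> GP2 f.
Proof.
  intros Hjoin Hconn (_ & _ & _ & Hinv) E HE.
  destruct (Hinv E HE) as (F & HF & HFE).
  destruct (proj2 (proj2 f_generates) F (proj1 HF)) as (E' & HE' & HE'F).
  exists (fun x y => E' x y /\ E' y x). split; [now apply sent_symmetrize|].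
  intros x1 a b [ya Ha] [yb Hb] Hab.
  set (K := img f (fun x y => E' x y /\ E' y x)).
  assert (HK : sent K) by now apply sent_img, sent_symmetrize.
  assert (HKF : subrel K F).
  { intros u v Huv. apply HE'F. revert Huv. apply img_mono. now intros x y []. }
  destruct (gen_path_between x0 x1 Hjoin Hconn) as (g & Hg).
  assert (HFgab : gp_homot F (tilde f (fun H => g H ++ a H)) (tilde f (fun H => g H ++ b H))).
  { unfold gp_homot, tilde. rewrite !map_app.
    apply (lhomot_prefix (sent_refl HF) _ (f x0) _ _ (f x1)).
    - exact (proj1 (gen_path_epath (gen_path_tilde Hg) HF)).
    - exact (proj1 (gen_path_epath (gen_path_tilde Ha) HF)).
    - exact (proj1 (gen_path_epath (gen_path_tilde Hb) HF)).
    - exact (gp_homot_mono K F (gen_path_tilde Ha) (gen_path_tilde Hb) HK HF HKF Hab). }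
  pose proof (HFE _ _ (in_GP_of_gen_path (gen_path_app Hg Ha))
                (in_GP_of_gen_path (gen_path_app Hg Hb)) HFgab) as HEgab.
  apply (lhomot_cancel (sent_refl HE) (g E) x0 x1 (a E) (b E) (gen_path_epath Hg HE)).
  - exact (proj1 (gen_path_epath Ha HE)).
  - exact (proj1 (gen_path_epath Hb HE)).
  - exact HEgab.
Qed.

End Lifting.

Theorem mainTheorem14 (X Y : UniformSpace) (f : X -> Y) :
  inhabited X ->
  Hausdorff X -> Hausdorff Y ->
  uniformly_joinable X -> chain_connected X ->
  generates f ->
  (gen_uniform_covering f <-> GP1 f /\ GP2 f) /\
  (GP1 f /\ GP2 f <-> exists x0 : X, tilde_unif_equiv f x0).
Proof.
  intros [x0] HX _ Hjoin Hconn Hf. split; split.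
  - intros (_ & P1 & P2 & _). now split.
  - intros [P1 P2].
    exact (conj Hf (conj P1 (conj P2 (conj (C1_of_GP Hf Hjoin P1 P2) (C2_of_GP2 Hf Hjoin P2))))).
  - intros [P1 P2]. exists x0. exact (tilde_unif_equiv_of_GP Hf x0 HX P1 P2).
  - intros [x1 Hequiv]. split.
    + exact (GP1_of_tilde_unif_equiv Hf x1 Hjoin Hconn Hequiv).
    + exact (GP2_of_tilde_unif_equiv Hf x1 Hjoin Hconn Hequiv).
Qed.
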